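(* Consider the following nine families of $7$-dimensional real nilpotent Lie algebras (each given by $(de^1,\dots,de^7)$): $147E=(0,0,0,e^{12},e^{23},-e^{13},\lambda e^{26}-e^{15}-(\lambda-1)e^{34})$, $\lambda\neq0,1$; $1357M=(0,0,e^{12},0,e^{24}+e^{13},e^{14},-(\lambda-1)e^{34}+e^{15}+\lambda e^{26})$, $\lambda\neq0$; $1357N=(0,0,e^{12},0,e^{13}+e^{24},e^{14},e^{46}+e^{34}+e^{15}+\lambda e^{23})$; $1357S=(0,0,e^{12},0,e^{13},e^{24}+e^{23},e^{25}+e^{34}+e^{16}+e^{15}+\lambda e^{26})$, $\lambda\neq1$; $12457N=(0,0,e^{12},e^{13},e^{23},e^{24}+e^{15},\lambda e^{25}+e^{26}+e^{34}-e^{35}+e^{16}+e^{14})$; $123457I=(0,0,e^{12},e^{13},e^{14}+e^{23},e^{15}+e^{24},\lambda e^{25}-(\lambda-1)e^{34}+e^{16})$; $147E1=(0,0,0,e^{12},e^{23},-e^{13},2e^{26}-2e^{34}-\lambda e^{16}+\lambda e^{25})$, $\lambda>1$; $1357QRS1=(0,0,e^{12},0,e^{13}+e^{24},e^{14}-e^{23},\lambda e^{26}+e^{15}-(\lambda-1)e^{34})$, $\lambda\neq0$; $12457N2=(0,0,e^{12},e^{13},e^{23},-e^{14}-e^{25},e^{15}-e^{35}+e^{16}+e^{24}+\lambda e^{25})$, $\lambda\ge0$. Among all members of these families, exactly three admit a calibrated $\mathrm{G}_2$-structure: $1357N$ with $\lambda=1$, $1357S$ with $\lambda=-3$, and $147E1$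 with $\lambda=2$. Explicitly, the following coframes $(f^1,\dots,f^7)$ define calibrated $\mathrm{G}_2$-structures on them: for $1357N(\lambda=1)$: $f^1=\sqrt3(2e^1-e^7-e^6-e^5)$, $f^2=\sqrt3(e^4+e^3-2e^2-e^6+e^5)$, $f^3=2e^3-e^6$, $f^4=2e^5$, $f^5=-e^3+3e^4+e^5-e^6$, $f^6=2e^3-e^5-e^6+3e^7$, $f^7=-\sqrt3 e^6$; for $1357S(\lambda=-3)$: $f^1=\sqrt7(2e^1+e^2-e^5+e^6)$, $f^2=7e^2+3e^5+5e^6$, $f^3=\sqrt7(e^3+2e^4-\tfrac32e^7)$, $f^4=3e^3+\tfrac72e^7$, $f^5=-\sqrt{70}\,e^6$, $f^6=\sqrt{10}(2e^5+e^6)$, $f^7=-2\sqrt{10}\,e^3$; for $147E1(\lambda=2)$: $f^1=\sqrt3(2e^1+e^5-e^2+e^6)$, $f^2=3e^2-e^5+e^6$, $f^3=e^3+2e^4$, $f^4=\sqrt3(e^3+e^7)$, $f^5=\sqrt2(e^6-e^5)$, $f^6=\sqrt6(e^5+e^6)$, $f^7=2\sqrt2(e^4-e^3)$.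
   Context: Each Lie algebra is given by a basis $e^1,\dots,e^7$ of its dual and the values $de^i$ of the Chevalley–Eilenberg differential; $e^{ij}=e^i\wedge e^j$. A coframe $(f^1,\dots,f^7)$ (basis of $\mathfrak g^*$) defines the $\mathrm{G}_2$-structure given by the $3$-form $\varphi=f^{127}+f^{347}+f^{567}+f^{135}-f^{236}-f^{146}-f^{245}$; a $\mathrm{G}_2$-structure on $\mathfrak g$ is a $3$-form of this type for some coframe, and it is calibrated if $d\varphi=0$. *)

From Stdlib Require Import Reals List.
Import ListNotations.
Open Scope R_scope.

(* Vectors of g = R^7 and covectors (elements of g* ) are both encoded as
   functions nat -> R; only the components 1..7 are ever used
   (index i <-> basis vector e_i resp. dual basis covector e^i). *)
Definition vec := nat -> R.

Definition sum7 (g : nat -> R) : R :=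
  g 1%nat + g 2%nat + g 3%nat + g 4%nat + g 5%nat + g 6%nat + g 7%nat.

Definition ev1 (c : nat -> R) (x : vec) : R := sum7 (fun j => c j * x j).

(* A 2-form given as a formal sum  sum c e^{ij}, with e^{ij}(x,y)=x_i y_j - x_j y_i *)
Definition form2 := list (R * nat * nat).
Definition ev2 (w : form2) (x y : vec) : R :=
  fold_right (fun t acc => let '(c, i, j) := t in c * (x i * y j - x j * y i) + acc) 0 w.

(* A 7-dimensional Lie algebra, given by de^k for k = 1..7 *)
Definition lie7 := nat -> form2.

(* Lie bracket determined by the Chevalley--Eilenberg differential:
   de^k(x,y) = - e^k([x,y]). *)
Definition br (L : lie7) (x y : vec) : vec := fun k => - ev2 (L k) x y.

(* A coframe candidate: f a = coefficient vector of f^a in the basis e^1..e^7 *)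
Definition frame := nat -> (nat -> R).

(* f^a /\ f^b /\ f^c evaluated on (x,y,z): a 3x3 determinant *)
Definition w3 (f : frame) (a b c : nat) (x y z : vec) : R :=
  let A1 := ev1 (f a) x in let A2 := ev1 (f a) y in let A3 := ev1 (f a) z in
  let B1 := ev1 (f b) x in let B2 := ev1 (f b) y in let B3 := ev1 (f b) z in
  let C1 := ev1 (f c) x in let C2 := ev1 (f c) y in let C3 := ev1 (f c) z in
  A1 * (B2 * C3 - B3 * C2) - A2 * (B1 * C3 - B3 * C1) + A3 * (B1 * C2 - B2 * C1).

Definition phi (f : frame) (x y z : vec) : R :=
  w3 f 1 2 7 x y z + w3 f 3 4 7 x y z + w3 f 5 6 7 x y z + w3 f 1 3 5 x y z
  - w3 f 2 3 6 x y z - w3 f 1 4 6 x y z - w3 f 2 4 5 x y z.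

(* Chevalley--Eilenberg differential of the 3-form phi:
   d phi(x0,..,x3) = sum_{i<j} (-1)^{i+j} phi([xi,xj], x0,..^i..^j..,x3) *)
Definition dphi (L : lie7) (f : frame) (x0 x1 x2 x3 : vec) : R :=
  - phi f (br L x0 x1) x2 x3 + phi f (br L x0 x2) x1 x3 - phi f (br L x0 x3) x1 x2
  - phi f (br L x1 x2) x0 x3 + phi f (br L x1 x3) x0 x2 - phi f (br L x2 x3) x0 x1.

Definition is_coframe (f : frame) : Prop :=
  forall a : nat -> R,
    (forall x : vec, sum7 (fun i => a i * ev1 (f i) x) = 0) ->
    forall i : nat, (1 <= i <= 7)%nat -> a i = 0.

Definition calibrated (L : lie7) (f : frame) : Prop :=
  is_coframe f /\ forall x0 x1 x2 x3 : vec, dphi L f x0 x1 x2 x3 = 0.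

Definition admits_calibrated_G2 (L : lie7) : Prop := exists f, calibrated L f.

Definition co (l : list (R * nat)) : nat -> R :=
  fun j => fold_right (fun t acc => let '(c, i) := t in
                         (if Nat.eqb i j then c else 0) + acc) 0 l.

Definition L147E (l : R) : lie7 := fun k => match k with
  | 4%nat => [(1, 1%nat, 2%nat)]
  | 5%nat => [(1, 2%nat, 3%nat)]
  | 6%nat => [(-1, 1%nat, 3%nat)]
  | 7%nat => [(l, 2%nat, 6%nat); (-1, 1%nat, 5%nat); (-(l-1), 3%nat, 4%nat)]
  | _ => [] end.

Definition L1357M (l : R) : lie7 := fun k => match k with
  | 3%nat => [(1, 1%nat, 2%nat)]
  | 5%nat => [(1, 2%nat, 4%nat); (1, 1%nat, 3%nat)]
  | 6%nat => [(1, 1%nat, 4%nat)]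
  | 7%nat => [(-(l-1), 3%nat, 4%nat); (1, 1%nat, 5%nat); (l, 2%nat, 6%nat)]
  | _ => [] end.

Definition L1357N (l : R) : lie7 := fun k => match k with
  | 3%nat => [(1, 1%nat, 2%nat)]
  | 5%nat => [(1, 1%nat, 3%nat); (1, 2%nat, 4%nat)]
  | 6%nat => [(1, 1%nat, 4%nat)]
  | 7%nat => [(1, 4%nat, 6%nat); (1, 3%nat, 4%nat); (1, 1%nat, 5%nat); (l, 2%nat, 3%nat)]
  | _ => [] end.

Definition L1357S (l : R) : lie7 := fun k => match k with
  | 3%nat => [(1, 1%nat, 2%nat)]
  | 5%nat => [(1, 1%nat, 3%nat)]
  | 6%nat => [(1, 2%nat, 4%nat); (1, 2%nat, 3%nat)]
  | 7%nat => [(1, 2%nat, 5%nat); (1, 3%nat, 4%nat); (1, 1%nat, 6%nat); (1, 1%nat, 5%nat);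
              (l, 2%nat, 6%nat)]
  | _ => [] end.

Definition L12457N (l : R) : lie7 := fun k => match k with
  | 3%nat => [(1, 1%nat, 2%nat)]
  | 4%nat => [(1, 1%nat, 3%nat)]
  | 5%nat => [(1, 2%nat, 3%nat)]
  | 6%nat => [(1, 2%nat, 4%nat); (1, 1%nat, 5%nat)]
  | 7%nat => [(l, 2%nat, 5%nat); (1, 2%nat, 6%nat); (1, 3%nat, 4%nat); (-1, 3%nat, 5%nat);
              (1, 1%nat, 6%nat); (1, 1%nat, 4%nat)]
  | _ => [] end.

Definition L123457I (l : R) : lie7 := fun k => match k with
  | 3%nat => [(1, 1%nat, 2%nat)]
  | 4%nat => [(1, 1%nat, 3%nat)]
  | 5%nat => [(1, 1%nat, 4%nat); (1, 2%nat, 3%nat)]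
  | 6%nat => [(1, 1%nat, 5%nat); (1, 2%nat, 4%nat)]
  | 7%nat => [(l, 2%nat, 5%nat); (-(l-1), 3%nat, 4%nat); (1, 1%nat, 6%nat)]
  | _ => [] end.

Definition L147E1 (l : R) : lie7 := fun k => match k with
  | 4%nat => [(1, 1%nat, 2%nat)]
  | 5%nat => [(1, 2%nat, 3%nat)]
  | 6%nat => [(-1, 1%nat, 3%nat)]
  | 7%nat => [(2, 2%nat, 6%nat); (-2, 3%nat, 4%nat); (-l, 1%nat, 6%nat); (l, 2%nat, 5%nat)]
  | _ => [] end.

Definition L1357QRS1 (l : R) : lie7 := fun k => match k with
  | 3%nat => [(1, 1%nat, 2%nat)]
  | 5%nat => [(1, 1%nat, 3%nat); (1, 2%nat, 4%nat)]
  | 6%nat => [(1, 1%nat, 4%nat); (-1, 2%nat, 3%nat)]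
  | 7%nat => [(l, 2%nat, 6%nat); (1, 1%nat, 5%nat); (-(l-1), 3%nat, 4%nat)]
  | _ => [] end.

Definition L12457N2 (l : R) : lie7 := fun k => match k with
  | 3%nat => [(1, 1%nat, 2%nat)]
  | 4%nat => [(1, 1%nat, 3%nat)]
  | 5%nat => [(1, 2%nat, 3%nat)]
  | 6%nat => [(-1, 1%nat, 4%nat); (-1, 2%nat, 5%nat)]
  | 7%nat => [(1, 1%nat, 5%nat); (-1, 3%nat, 5%nat); (1, 1%nat, 6%nat); (1, 2%nat, 4%nat);
              (l, 2%nat, 5%nat)]
  | _ => [] end.

Definition frame_1357N : frame := fun a => match a with
  | 1%nat => co [(2 * sqrt 3, 1%nat); (- sqrt 3, 7%nat); (- sqrt 3, 6%nat); (- sqrt 3, 5%nat)]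
  | 2%nat => co [(sqrt 3, 4%nat); (sqrt 3, 3%nat); (-2 * sqrt 3, 2%nat); (- sqrt 3, 6%nat);
                 (sqrt 3, 5%nat)]
  | 3%nat => co [(2, 3%nat); (-1, 6%nat)]
  | 4%nat => co [(2, 5%nat)]
  | 5%nat => co [(-1, 3%nat); (3, 4%nat); (1, 5%nat); (-1, 6%nat)]
  | 6%nat => co [(2, 3%nat); (-1, 5%nat); (-1, 6%nat); (3, 7%nat)]
  | 7%nat => co [(- sqrt 3, 6%nat)]
  | _ => co [] end.

Definition frame_1357S : frame := fun a => match a with
  | 1%nat => co [(2 * sqrt 7, 1%nat); (sqrt 7, 2%nat); (- sqrt 7, 5%nat); (sqrt 7, 6%nat)]
  | 2%nat => co [(7, 2%nat); (3, 5%nat); (5, 6%nat)]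
  | 3%nat => co [(sqrt 7, 3%nat); (2 * sqrt 7, 4%nat); (- (3/2) * sqrt 7, 7%nat)]
  | 4%nat => co [(3, 3%nat); (7/2, 7%nat)]
  | 5%nat => co [(- sqrt 70, 6%nat)]
  | 6%nat => co [(2 * sqrt 10, 5%nat); (sqrt 10, 6%nat)]
  | 7%nat => co [(-2 * sqrt 10, 3%nat)]
  | _ => co [] end.

Definition frame_147E1 : frame := fun a => match a with
  | 1%nat => co [(2 * sqrt 3, 1%nat); (sqrt 3, 5%nat); (- sqrt 3, 2%nat); (sqrt 3, 6%nat)]
  | 2%nat => co [(3, 2%nat); (-1, 5%nat); (1, 6%nat)]
  | 3%nat => co [(1, 3%nat); (2, 4%nat)]
  | 4%nat => co [(sqrt 3, 3%nat); (sqrt 3, 7%nat)]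
  | 5%nat => co [(sqrt 2, 6%nat); (- sqrt 2, 5%nat)]
  | 6%nat => co [(sqrt 6, 5%nat); (sqrt 6, 6%nat)]
  | 7%nat => co [(2 * sqrt 2, 4%nat); (-2 * sqrt 2, 3%nat)]
  | _ => co [] end.

(* A G2 form is nondegenerate in a strong sense: [iota_Y iota_X phi = 0] forces [X] and [Y] to be
   linearly dependent, because in coframe coordinates [iota_Y iota_X phi] is the G2 cross product
   [u x v] of the coordinate vectors, and [|u x v|^2 = |u /\ v|^2].  In each family a few components
   of [d phi = 0], computed in the basis [e_i] from the structure constants, show that the 2-form
   [iota_{e_7} phi] annihilates a vector independent of [e_7]: a basis vector [e_k], or, for
   1357QRS1 with lambda = 1, a combination of [e_3], [e_5], [e_6].  For the three exceptional
   members the given coframe is a diagonal rescaling of a rational one, which turns [phi] into a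
   multiple of a form with rational coefficients; [d phi = 0] is then a polynomial identity. *)

From Stdlib Require Import Reals List Lia Lra Nsatz Classical.
Import ListNotations.
Open Scope R_scope.

(** * Linear algebra *)

Fixpoint sumR (n : nat) (g : nat -> R) : R :=
  match n with O => 0 | S n => sumR n g + g n end.

Lemma sumR_ext n g h : (forall i, (i < n)%nat -> g i = h i) -> sumR n g = sumR n h.
Proof.
  induction n as [|n IH]; intros H; simpl; [reflexivity|].
  rewrite IH by (intros; apply H; lia). rewrite H by lia. reflexivity.
Qed.

Lemma sumR_eq0 n g : (forall i, (i < n)%nat -> g i = 0) -> sumR n g = 0.
Proof.
  induction n as [|n IH]; intros H; simpl; [reflexivity|].
  rewrite IH by (intros; apply H; lia). rewrite H by lia. ring.
Qed.

Lemma sumR_add n g h : sumR n (fun i => g i + h i) = sumR n g + sumR n h.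
Proof. induction n as [|n IH]; simpl; [ring|]. rewrite IH. ring. Qed.

Lemma sumR_scal n a g : sumR n (fun i => a * g i) = a * sumR n g.
Proof. induction n as [|n IH]; simpl; [ring|]. rewrite IH. ring. Qed.

Lemma sumR_swap n m (G : nat -> nat -> R) :
  sumR n (fun i => sumR m (G i)) = sumR m (fun j => sumR n (fun i => G i j)).
Proof.
  induction n as [|n IH]; simpl.
  - symmetry. apply sumR_eq0. reflexivity.
  - rewrite IH, <- sumR_add. reflexivity.
Qed.

Definition skip (k i : nat) : nat := if Nat.ltb i k then i else S i.

Lemma skip_lt k i m : (k < m)%nat -> (i < m - 1)%nat -> (skip k i < m)%nat.
Proof. unfold skip. destruct (Nat.ltb_spec i k); lia. Qed.

Lemma skip_surj m k j :
  (k < m)%nat -> (j < m)%nat -> j <> k -> exists i, (i < m - 1)%nat /\ skip k i = j.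
Proof.
  intros Hk Hj Hjk. unfold skip. destruct (Nat.lt_ge_cases j k).
  - exists j. destruct (Nat.ltb_spec j k); [split; lia | lia].
  - exists (j - 1)%nat. destruct (Nat.ltb_spec (j - 1) k); [lia | split; lia].
Qed.

Lemma sumR_skip m k g :
  (k < m)%nat -> sumR m g = g k + sumR (m - 1) (fun i => g (skip k i)).
Proof.
  revert k. induction m as [|m IH]; intros k Hk; [lia|].
  replace (S m - 1)%nat with m by lia. simpl sumR.
  destruct (Nat.eq_dec k m) as [->|Hne].
  - rewrite (sumR_ext m (fun i => g (skip m i)) g); [ring|].
    intros i Hi. unfold skip. destruct (Nat.ltb_spec i m); [reflexivity | lia].
  - rewrite (IH k) by lia. destruct m as [|m]; [lia|].
    replace (S m - 1)%nat with m by lia. simpl sumR.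
    replace (skip k m) with (S m); [ring|].
    unfold skip. destruct (Nat.ltb_spec m k); lia.
Qed.

Lemma dependent_of_lt n m (v : nat -> nat -> R) : (n < m)%nat ->
  exists c : nat -> R, (exists i, (i < m)%nat /\ c i <> 0) /\
    forall j, (j < n)%nat -> sumR m (fun i => c i * v i j) = 0.
Proof.
  revert m v. induction n as [|n IH]; intros m v Hnm.
  - exists (fun _ => 1). split; [exists O; split; [lia | lra] | intros; lia].
  - destruct (classic (exists k, (k < m)%nat /\ v k n <> 0)) as [[k [Hk Hvk]] | Hno].
    + (* eliminate the last coordinate with the pivot [v k] *)
      set (w := fun i j => v (skip k i) j - v (skip k i) n / v k n * v k j).
      destruct (IH (m - 1)%nat w) as [c' [[i0 [Hi0 Hc0]] Hc']]; [lia|].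
      set (s := sumR (m - 1) (fun i => c' i * v (skip k i) n)).
      set (c := fun i => if Nat.eqb i k then - s / v k n
                         else if Nat.ltb i k then c' i else c' (i - 1)%nat).
      assert (Hck : c k = - s / v k n) by (unfold c; rewrite Nat.eqb_refl; reflexivity).
      assert (Hcs : forall i, c (skip k i) = c' i).
      { intros i. unfold c, skip. destruct (Nat.ltb_spec i k).
        - destruct (Nat.eqb_spec i k); [lia|]. destruct (Nat.ltb_spec i k); [reflexivity | lia].
        - destruct (Nat.eqb_spec (S i) k); [lia|]. destruct (Nat.ltb_spec (S i) k); [lia|].
          f_equal. lia. }
      exists c. split.
      * exists (skip k i0). split; [apply skip_lt; lia | rewrite Hcs; exact Hc0].
      * intros j Hj. rewrite (sumR_skip m k) by exact Hk. rewrite Hck.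
        rewrite (sumR_ext _ _ (fun i => c' i * v (skip k i) j))
          by (intros; rewrite Hcs; reflexivity).
        destruct (Nat.eq_dec j n) as [->|Hjn]; [fold s; field; exact Hvk|].
        assert (Hw := Hc' j ltac:(lia)). unfold w in Hw.
        rewrite (sumR_ext _ _ (fun i => c' i * v (skip k i) j
                                        + - (v k j / v k n) * (c' i * v (skip k i) n))) in Hw
          by (intros; field; exact Hvk).
        rewrite sumR_add, sumR_scal in Hw. fold s in Hw.
        replace (sumR (m - 1) (fun i => c' i * v (skip k i) j)) with (v k j / v k n * s) by lra.
        field. exact Hvk.
    + destruct (IH m v) as [c [Hnz Hc]]; [lia|].
      exists c. split; [exact Hnz|]. intros j Hj.
      destruct (Nat.eq_dec j n) as [->|Hjn]; [|apply Hc; lia].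
      apply sumR_eq0. intros i Hi.
      destruct (Req_dec (v i n) 0) as [E|E]; [rewrite E; ring|].
      exfalso. apply Hno. exists i. split; assumption.
Qed.

Lemma kernel_trivial_of_independent_rows n (F : nat -> nat -> R) :
  (forall a : nat -> R, (forall j, (j < n)%nat -> sumR n (fun i => a i * F i j) = 0) ->
     forall i, (i < n)%nat -> a i = 0) ->
  forall Z, (forall i, (i < n)%nat -> sumR n (fun j => F i j * Z j) = 0) ->
  forall j, (j < n)%nat -> Z j = 0.
Proof.
  intros Hind Z HZ p Hp.
  destruct (Req_dec (Z p) 0) as [E|HZp]; [exact E|exfalso].
  (* The rows restricted to the coordinates other than [p] are dependent; as [F Z = 0] with
     [Z p <> 0], the same relation kills the column [p]. *)
  destruct (dependent_of_lt (n - 1) n (fun i j => F i (skip p j))) as [c [[i0 [Hi0 Hc0]] Hc]];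
    [lia|].
  apply Hc0, (Hind c); [|exact Hi0]. intros j Hj.
  destruct (Nat.eq_dec j p) as [->|Hjp].
  - assert (E : sumR n (fun i => c i * sumR n (fun j => F i j * Z j)) = 0)
      by (apply sumR_eq0; intros i Hi; rewrite HZ by exact Hi; ring).
    rewrite (sumR_ext n _ (fun i => sumR n (fun j => c i * F i j * Z j))) in E
      by (intros i _; rewrite <- sumR_scal; apply sumR_ext; intros; ring).
    rewrite sumR_swap, (sumR_skip n p) in E by exact Hp.
    rewrite (sumR_eq0 (n - 1)) in E.
    + rewrite (sumR_ext n _ (fun i => Z p * (c i * F i p))), sumR_scal in E by (intros; ring).
      apply (Rmult_eq_reg_l (Z p)); [lra | exact HZp].
    + intros j0 Hj0.
      rewrite (sumR_ext n _ (fun i => Z (skip p j0) * (c i * F i (skip p j0)))), sumR_scal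
        by (intros; ring).
      rewrite (Hc j0 Hj0). ring.
  - destruct (skip_surj n p j Hp Hj Hjp) as [j' [Hj' <-]]. exact (Hc j' Hj').
Qed.

(** * The G2 form in coordinates *)

Definition eb (i : nat) : vec := fun j => if Nat.eqb j i then 1 else 0.

Definition phi_e (f : frame) (i j k : nat) : R := phi f (eb i) (eb j) (eb k).

Definition coords (f : frame) (x : vec) : nat -> R := fun a => ev1 (f a) x.

Definition det3 (u v w : nat -> R) (a b c : nat) : R :=
  u a * (v b * w c - w b * v c) - v a * (u b * w c - w b * u c) + w a * (u b * v c - v b * u c).

Definition g2 (u v w : nat -> R) : R :=
  det3 u v w 1 2 7 + det3 u v w 3 4 7 + det3 u v w 5 6 7 + det3 u v w 1 3 5
  - det3 u v w 2 3 6 - det3 u v w 1 4 6 - det3 u v w 2 4 5.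

Lemma phi_g2 f x y z : phi f x y z = g2 (coords f x) (coords f y) (coords f z).
Proof. reflexivity. Qed.

Lemma g2_expand3 u v w : g2 u v w = sum7 (fun c => g2 u v (eb c) * w c).
Proof. unfold g2, det3, sum7, eb; simpl. ring. Qed.

Lemma ev1_eb c k : (1 <= k <= 7)%nat -> ev1 c (eb k) = c k.
Proof.
  intros Hk. unfold ev1, sum7, eb.
  destruct k as [|[|[|[|[|[|[|[|k]]]]]]]]; try lia; simpl; ring.
Qed.

Lemma phi_cyclic f x y z : phi f x y z = phi f y z x.
Proof. rewrite !phi_g2. unfold g2, det3. ring. Qed.

Lemma phi_swap12 f x y z : phi f x y z = - phi f y x z.
Proof. rewrite !phi_g2. unfold g2, det3. ring. Qed.

Lemma phi_swap23 f x y z : phi f x y z = - phi f x z y.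
Proof. rewrite !phi_g2. unfold g2, det3. ring. Qed.

Lemma phi_swap13 f x y z : phi f x y z = - phi f z y x.
Proof. rewrite !phi_g2. unfold g2, det3. ring. Qed.

Lemma phi_alt12 f x z : phi f x x z = 0.
Proof. rewrite phi_g2. unfold g2, det3. ring. Qed.

Lemma phi_alt23 f x y : phi f x y y = 0.
Proof. rewrite phi_g2. unfold g2, det3. ring. Qed.

Lemma phi_alt13 f x y : phi f x y x = 0.
Proof. rewrite phi_cyclic. apply phi_alt23. Qed.

Lemma phi_linear3 f x y z : phi f x y z = sum7 (fun k => z k * phi f x y (eb k)).
Proof.
  unfold sum7. rewrite !phi_g2, !(g2_expand3 _ _ (coords f _)).
  unfold coords, sum7; cbv beta. rewrite !ev1_eb by lia. unfold ev1, sum7. ring.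
Qed.

Lemma phi_linear1 f x y z : phi f x y z = sum7 (fun k => x k * phi f (eb k) y z).
Proof.
  rewrite phi_cyclic, phi_linear3. unfold sum7.
  rewrite <- !(phi_cyclic f (eb _) y z). reflexivity.
Qed.

Lemma phi_linear2 f x y z : phi f x y z = sum7 (fun k => y k * phi f x (eb k) z).
Proof.
  rewrite <- phi_cyclic, phi_linear3. unfold sum7.
  rewrite !(phi_cyclic f z x (eb _)), !(phi_cyclic f x (eb _) z). reflexivity.
Qed.

Lemma phi_eq0_of_basis f x y :
  (forall k, (1 <= k <= 7)%nat -> phi f x y (eb k) = 0) -> forall z, phi f x y z = 0.
Proof. intros H z. rewrite phi_linear3. unfold sum7. rewrite !H by lia. ring. Qed.

(* [c |-> g2 u v (eb c)] is the G2 cross product of [u] and [v]; its norm is that of [u /\ v]. *)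
Lemma g2_cross_norm u v :
  2 * sum7 (fun c => (g2 u v (eb c))^2) = sum7 (fun a => sum7 (fun b => (u a * v b - u b * v a)^2)).
Proof. unfold sum7, g2, det3, eb; simpl. ring. Qed.

Lemma sum7_nonneg g : (forall a, 0 <= g a) -> 0 <= sum7 g.
Proof.
  intros Hg. unfold sum7.
  pose proof (Hg 1%nat); pose proof (Hg 2%nat); pose proof (Hg 3%nat); pose proof (Hg 4%nat);
  pose proof (Hg 5%nat); pose proof (Hg 6%nat); pose proof (Hg 7%nat).
  lra.
Qed.

Lemma sum7_nonneg_eq0 g :
  (forall a, 0 <= g a) -> sum7 g = 0 -> forall a, (1 <= a <= 7)%nat -> g a = 0.
Proof.
  intros Hg Hs a Ha. unfold sum7 in Hs.
  pose proof (Hg 1%nat); pose proof (Hg 2%nat); pose proof (Hg 3%nat); pose proof (Hg 4%nat);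
  pose proof (Hg 5%nat); pose proof (Hg 6%nat); pose proof (Hg 7%nat).
  destruct a as [|[|[|[|[|[|[|[|a]]]]]]]]; try lia; lra.
Qed.

Lemma g2_cross_eq0_minors u v :
  (forall c, (1 <= c <= 7)%nat -> g2 u v (eb c) = 0) ->
  forall a b, (1 <= a <= 7)%nat -> (1 <= b <= 7)%nat -> u a * v b = u b * v a.
Proof.
  intros Hc a b Ha Hb.
  assert (Hrows : sum7 (fun a => sum7 (fun b => (u a * v b - u b * v a)^2)) = 0).
  { rewrite <- g2_cross_norm. unfold sum7. rewrite !Hc by lia. ring. }
  assert (Hrow := sum7_nonneg_eq0 _ (fun a => sum7_nonneg _ (fun b => pow2_ge_0 _)) Hrows a Ha).
  assert (Hab := sum7_nonneg_eq0 _ (fun b => pow2_ge_0 _) Hrow b Hb).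
  simpl in Hab. nra.
Qed.

Lemma coframe_kernel f Z : is_coframe f ->
  (forall a, (1 <= a <= 7)%nat -> ev1 (f a) Z = 0) -> forall j, (1 <= j <= 7)%nat -> Z j = 0.
Proof.
  intros Hf HZ j Hj. replace j with (S (j - 1)) by lia.
  apply (kernel_trivial_of_independent_rows 7 (fun i k => f (S i) (S k))) with
    (Z := fun k => Z (S k)); [| | lia].
  - intros a Ha i Hi. replace i with (S i - 1)%nat by lia.
    apply (Hf (fun i => a (i - 1)%nat)); [|lia]. intros x.
    assert (E : sum7 (fun i => a (i - 1)%nat * ev1 (f i) x)
                = sum7 (fun k => x k * sumR 7 (fun i => a i * f (S i) k)))
      by (unfold ev1, sum7; simpl; ring).
    rewrite E. unfold sum7. rewrite !Ha by lia. ring.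
  - intros i Hi. rewrite <- (HZ (S i)) by lia. unfold ev1, sum7. simpl. ring.
Qed.

Lemma phi_contraction_eq0_minors f X Y : is_coframe f -> (forall Z, phi f X Y Z = 0) ->
  forall i j, (1 <= i <= 7)%nat -> (1 <= j <= 7)%nat -> X i * Y j = X j * Y i.
Proof.
  intros Hf HXY i j Hi Hj.
  set (u := coords f X). set (v := coords f Y).
  assert (Hcross : forall c, (1 <= c <= 7)%nat -> g2 u v (eb c) = 0).
  { apply Hf. intros Z. rewrite <- (HXY Z), phi_g2, (g2_expand3 _ _ (coords f Z)). reflexivity. }
  assert (Hminors := g2_cross_eq0_minors u v Hcross).
  destruct (classic (forall a, (1 <= a <= 7)%nat -> u a = 0)) as [Hu0|Hu].
  - rewrite !(coframe_kernel f X Hf Hu0) by assumption. ring.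
  - apply not_all_ex_not in Hu. destruct Hu as [p Hp].
    apply imply_to_and in Hp. destruct Hp as [Hp Hup].
    assert (HY : forall k, (1 <= k <= 7)%nat -> Y k - v p / u p * X k = 0).
    { apply (coframe_kernel f _ Hf). intros a Ha.
      assert (E : ev1 (f a) (fun k => Y k - v p / u p * X k) = (u p * v a - u a * v p) / u p)
        by (unfold u, v, coords, ev1, sum7; field; exact Hup).
      rewrite E, (Hminors p a Hp Ha). unfold Rdiv. ring. }
    assert (HYi := HY i Hi). assert (HYj := HY j Hj).
    replace (Y i) with (v p / u p * X i) by lra. replace (Y j) with (v p / u p * X j) by lra.
    ring.
Qed.

Lemma e7_contraction_kernel f Y : is_coframe f -> (forall Z, phi f (eb 7) Y Z = 0) ->
  forall j, (1 <= j <= 6)%nat -> Y j = 0.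
Proof.
  intros Hf HY j Hj.
  assert (H := phi_contraction_eq0_minors f (eb 7) Y Hf HY 7 j ltac:(lia) ltac:(lia)).
  unfold eb in H. simpl in H. rewrite (proj2 (Nat.eqb_neq j 7)) in H by lia. lra.
Qed.

Lemma e7_ek_contraction_nonzero f k : is_coframe f -> (1 <= k <= 6)%nat ->
  ~ (forall i, (1 <= i <= 6)%nat -> i <> k -> phi_e f i k 7 = 0).
Proof.
  intros Hf Hk Hik.
  assert (Hkk : eb k k = 0).
  { apply (e7_contraction_kernel f (eb k) Hf); [|exact Hk].
    apply phi_eq0_of_basis. intros i Hi.
    destruct (Nat.eq_dec i k) as [->|Hnk]; [apply phi_alt23|].
    destruct (Nat.eq_dec i 7) as [->|Hn7]; [apply phi_alt13|].
    rewrite phi_swap13. fold (phi_e f i k 7). rewrite (Hik i) by lia. ring. }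
  unfold eb in Hkk. rewrite Nat.eqb_refl in Hkk. lra.
Qed.

(** * Components of [d phi]: the nine families *)

Lemma Rmult_eq0_cancel_l c x : c <> 0 -> c * x = 0 -> x = 0.
Proof. intros Hc H. apply (Rmult_eq_reg_l c); [lra | exact Hc]. Qed.

Definition dphi_at (L : lie7) (f : frame) (i j k m : nat) : R :=
  dphi L f (eb i) (eb j) (eb k) (eb m).

Lemma calibrated_dphi_at {L f} : calibrated L f -> forall i j k m : nat, dphi_at L f i j k m = 0.
Proof. intros [_ Hd] i j k m. apply Hd. Qed.

(* Rewrites each [phi f (eb a) (eb b) (eb c)] as [0] or as [+/- phi_e f a' b' c'],
   [a' < b' < c']. *)
Ltac sort_phi f :=
  repeat match goal with
  | |- context [phi f (eb ?a) (eb ?b) (eb ?c)] =>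
      lazymatch eval compute in (Nat.compare a b) with
      | Gt => rewrite (phi_swap12 f (eb a) (eb b) (eb c))
      | Eq => rewrite (phi_alt12 f (eb a) (eb c))
      | Lt =>
          lazymatch eval compute in (Nat.compare b c) with
          | Gt => rewrite (phi_swap23 f (eb a) (eb b) (eb c))
          | Eq => rewrite (phi_alt23 f (eb a) (eb b))
          | Lt => fold (phi_e f a b c)
          end
      end
  end.

(* Proves [lhs = 0] from [H : dphi_at L f i j k m = 0] when [lhs] is the [(ijkm)]-component of
   [d phi] written in the components of [phi]: the brackets of basis vectors are expanded with
   the structure constants of [L]. *)
Ltac structure_eq H :=
  lazymatch type of H with
  | dphi_at (?F _) ?f _ _ _ _ = 0 =>
      etransitivity; [|exact H];
      unfold dphi_at, dphi, phi_e;
      rewrite !(phi_linear1 f (br _ _ _)); unfold sum7;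
      sort_phi f;
      cbv beta iota fix delta [br ev2 F fold_right eb Nat.eqb];
      ring
  end.

(* Closes the goals [forall i, 1 <= i <= 6 -> i <> k -> phi_e f i k 7 = 0] left by
   [e7_ek_contraction_nonzero] from hypotheses on the components [phi_e f a b c], [a < b < c]. *)
Ltac contraction_components_eq0 :=
  intros i Hi Hik; destruct i as [|[|[|[|[|[|[|]]]]]]]; try lia;
  lazymatch goal with |- phi_e ?f _ _ _ = 0 => unfold phi_e; sort_phi f; lra end.

Lemma L147E_not_calibrated l f : l <> 1 -> ~ calibrated (L147E l) f.
Proof.
  intros Hl Hcal. pose proof (proj1 Hcal) as Hf.
  assert (E1346 : (1 - l) * phi_e f 1 6 7 = 0)
    by structure_eq (calibrated_dphi_at Hcal 1 3 4 6).
  assert (E1237 : - phi_e f 1 5 7 - phi_e f 2 6 7 - phi_e f 3 4 7 = 0)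
    by structure_eq (calibrated_dphi_at Hcal 1 2 3 7).
  assert (E1256 : - l * phi_e f 1 5 7 + phi_e f 2 6 7 + phi_e f 4 5 6 = 0)
    by structure_eq (calibrated_dphi_at Hcal 1 2 5 6).
  assert (E1345 : (1 - l) * phi_e f 1 5 7 - phi_e f 3 4 7 - phi_e f 4 5 6 = 0)
    by structure_eq (calibrated_dphi_at Hcal 1 3 4 5).
  assert (E2346 : (1 - l) * phi_e f 2 6 7 + l * phi_e f 3 4 7 - phi_e f 4 5 6 = 0)
    by structure_eq (calibrated_dphi_at Hcal 2 3 4 6).
  assert (E1356 : phi_e f 3 6 7 = 0) by structure_eq (calibrated_dphi_at Hcal 1 3 5 6).
  assert (E1267 : phi_e f 4 6 7 = 0) by structure_eq (calibrated_dphi_at Hcal 1 2 6 7).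
  assert (E1357 : phi_e f 5 6 7 = 0) by structure_eq (calibrated_dphi_at Hcal 1 3 5 7).
  assert (H167 : phi_e f 1 6 7 = 0) by (apply (Rmult_eq0_cancel_l (1 - l)); [lra | nsatz]).
  assert (H267 : phi_e f 2 6 7 = 0)
    by (apply (Rmult_eq0_cancel_l (l * l - l + 1)); [nra | nsatz]).
  apply (e7_ek_contraction_nonzero f 6 Hf); [lia | contraction_components_eq0].
Qed.

Lemma L1357M_not_calibrated l f : l <> 0 -> ~ calibrated (L1357M l) f.
Proof.
  intros Hl Hcal. pose proof (proj1 Hcal) as Hf.
  assert (E1247 : - phi_e f 1 5 7 + phi_e f 2 6 7 + phi_e f 3 4 7 = 0)
    by structure_eq (calibrated_dphi_at Hcal 1 2 4 7).
  assert (E1256 : - l * phi_e f 1 5 7 - phi_e f 2 6 7 + phi_e f 3 5 6 = 0)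
    by structure_eq (calibrated_dphi_at Hcal 1 2 5 6).
  assert (E1345 : (1 - l) * phi_e f 1 5 7 + phi_e f 3 4 7 - phi_e f 3 5 6 = 0)
    by structure_eq (calibrated_dphi_at Hcal 1 3 4 5).
  assert (E2346 : (1 - l) * phi_e f 2 6 7 + l * phi_e f 3 4 7 + phi_e f 3 5 6 = 0)
    by structure_eq (calibrated_dphi_at Hcal 2 3 4 6).
  assert (E1237 : phi_e f 2 5 7 = 0) by structure_eq (calibrated_dphi_at Hcal 1 2 3 7).
  assert (E1257 : phi_e f 3 5 7 = 0) by structure_eq (calibrated_dphi_at Hcal 1 2 5 7).
  assert (E2456 : l * phi_e f 4 5 7 = 0) by structure_eq (calibrated_dphi_at Hcal 2 4 5 6).
  assert (E1367 : phi_e f 5 6 7 = 0) by structure_eq (calibrated_dphi_at Hcal 1 3 6 7).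
  assert (H157 : phi_e f 1 5 7 = 0)
    by (apply (Rmult_eq0_cancel_l (l * l - l + 1)); [nra | nsatz]).
  assert (H457 : phi_e f 4 5 7 = 0) by (apply (Rmult_eq0_cancel_l l); [lra | nsatz]).
  apply (e7_ek_contraction_nonzero f 5 Hf); [lia | contraction_components_eq0].
Qed.

Lemma L1357N_not_calibrated l f : l <> 1 -> ~ calibrated (L1357N l) f.
Proof.
  intros Hl Hcal. pose proof (proj1 Hcal) as Hf.
  assert (E1235 : l * phi_e f 1 5 7 + phi_e f 2 3 7 = 0)
    by structure_eq (calibrated_dphi_at Hcal 1 2 3 5).
  assert (E1247 : - phi_e f 1 5 7 + phi_e f 2 6 7 + phi_e f 3 4 7 = 0)
    by structure_eq (calibrated_dphi_at Hcal 1 2 4 7).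
  assert (E1345 : phi_e f 1 5 7 + phi_e f 3 4 7 - phi_e f 3 5 6 = 0)
    by structure_eq (calibrated_dphi_at Hcal 1 3 4 5).
  assert (E1456 : - phi_e f 1 5 7 - phi_e f 4 6 7 = 0)
    by structure_eq (calibrated_dphi_at Hcal 1 4 5 6).
  assert (E2346 : phi_e f 2 3 7 + phi_e f 2 6 7 + phi_e f 3 5 6 + l * phi_e f 4 6 7 = 0)
    by structure_eq (calibrated_dphi_at Hcal 2 3 4 6).
  assert (E1237 : phi_e f 2 5 7 = 0) by structure_eq (calibrated_dphi_at Hcal 1 2 3 7).
  assert (E1257 : phi_e f 3 5 7 = 0) by structure_eq (calibrated_dphi_at Hcal 1 2 5 7).
  assert (E1267 : phi_e f 3 6 7 = 0) by structure_eq (calibrated_dphi_at Hcal 1 2 6 7).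
  assert (E1347 : phi_e f 3 6 7 - phi_e f 4 5 7 = 0)
    by structure_eq (calibrated_dphi_at Hcal 1 3 4 7).
  assert (E1367 : phi_e f 5 6 7 = 0) by structure_eq (calibrated_dphi_at Hcal 1 3 6 7).
  assert (H157 : phi_e f 1 5 7 = 0) by (apply (Rmult_eq0_cancel_l (l - 1)); [lra | nsatz]).
  apply (e7_ek_contraction_nonzero f 5 Hf); [lia | contraction_components_eq0].
Qed.

Lemma L1357S_not_calibrated l f : l <> -3 -> ~ calibrated (L1357S l) f.
Proof.
  intros Hl Hcal. pose proof (proj1 Hcal) as Hf.
  assert (E1237 : - phi_e f 1 6 7 + phi_e f 2 5 7 = 0)
    by structure_eq (calibrated_dphi_at Hcal 1 2 3 7).
  assert (E1247 : - phi_e f 1 6 7 + phi_e f 3 4 7 = 0)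
    by structure_eq (calibrated_dphi_at Hcal 1 2 4 7).
  assert (E1256 : - l * phi_e f 1 5 7 + phi_e f 1 6 7 + phi_e f 2 5 7 - phi_e f 2 6 7
                  + phi_e f 3 5 6 = 0)
    by structure_eq (calibrated_dphi_at Hcal 1 2 5 6).
  assert (E1345 : phi_e f 1 5 7 + phi_e f 3 4 7 = 0)
    by structure_eq (calibrated_dphi_at Hcal 1 3 4 5).
  assert (E1346 : phi_e f 1 6 7 + phi_e f 3 4 7 - phi_e f 4 5 6 = 0)
    by structure_eq (calibrated_dphi_at Hcal 1 3 4 6).
  assert (E2345 : phi_e f 2 5 7 + phi_e f 3 4 7 - phi_e f 3 5 6 + phi_e f 4 5 6 = 0)
    by structure_eq (calibrated_dphi_at Hcal 2 3 4 5).
  assert (E2346 : phi_e f 2 6 7 + l * phi_e f 3 4 7 = 0)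
    by structure_eq (calibrated_dphi_at Hcal 2 3 4 6).
  assert (E1257 : phi_e f 3 5 7 = 0) by structure_eq (calibrated_dphi_at Hcal 1 2 5 7).
  assert (E1347 : - phi_e f 4 5 7 = 0) by structure_eq (calibrated_dphi_at Hcal 1 3 4 7).
  assert (E1367 : phi_e f 5 6 7 = 0) by structure_eq (calibrated_dphi_at Hcal 1 3 6 7).
  assert (H157 : phi_e f 1 5 7 = 0) by (apply (Rmult_eq0_cancel_l (l + 3)); [lra | nsatz]).
  assert (H257 : phi_e f 2 5 7 = 0) by (apply (Rmult_eq0_cancel_l (l + 3)); [lra | nsatz]).
  apply (e7_ek_contraction_nonzero f 5 Hf); [lia | contraction_components_eq0].
Qed.

Lemma L12457N_not_calibrated l f : ~ calibrated (L12457N l) f.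
Proof.
  intros Hcal. pose proof (proj1 Hcal) as Hf.
  assert (E1247 : - phi_e f 1 6 7 + phi_e f 3 4 7 = 0)
    by structure_eq (calibrated_dphi_at Hcal 1 2 4 7).
  assert (E1346 : phi_e f 1 6 7 + phi_e f 3 4 7 - phi_e f 3 6 7 = 0)
    by structure_eq (calibrated_dphi_at Hcal 1 3 4 6).
  assert (E1257 : phi_e f 2 6 7 + phi_e f 3 5 7 = 0)
    by structure_eq (calibrated_dphi_at Hcal 1 2 5 7).
  assert (E2356 : - phi_e f 2 6 7 + phi_e f 3 5 7 - l * phi_e f 3 6 7 = 0)
    by structure_eq (calibrated_dphi_at Hcal 2 3 5 6).
  assert (E1267 : phi_e f 3 6 7 = 0) by structure_eq (calibrated_dphi_at Hcal 1 2 6 7).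
  assert (E1367 : phi_e f 4 6 7 = 0) by structure_eq (calibrated_dphi_at Hcal 1 3 6 7).
  assert (E2367 : phi_e f 5 6 7 = 0) by structure_eq (calibrated_dphi_at Hcal 2 3 6 7).
  assert (H167 : phi_e f 1 6 7 = 0) by nsatz.
  assert (H267 : phi_e f 2 6 7 = 0) by nsatz.
  apply (e7_ek_contraction_nonzero f 6 Hf); [lia | contraction_components_eq0].
Qed.

Lemma L123457I_not_calibrated l f : ~ calibrated (L123457I l) f.
Proof.
  intros Hcal. pose proof (proj1 Hcal) as Hf.
  assert (E1247 : - phi_e f 1 6 7 + phi_e f 2 5 7 + phi_e f 3 4 7 = 0)
    by structure_eq (calibrated_dphi_at Hcal 1 2 4 7).
  assert (E1256 : l * phi_e f 1 6 7 + phi_e f 2 5 7 + phi_e f 3 5 6 = 0)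
    by structure_eq (calibrated_dphi_at Hcal 1 2 5 6).
  assert (E1346 : (1 - l) * phi_e f 1 6 7 + phi_e f 3 4 7 + phi_e f 3 5 6 = 0)
    by structure_eq (calibrated_dphi_at Hcal 1 3 4 6).
  assert (E2345 : (1 - l) * phi_e f 2 5 7 + l * phi_e f 3 4 7 - phi_e f 3 5 6 = 0)
    by structure_eq (calibrated_dphi_at Hcal 2 3 4 5).
  assert (E1257 : phi_e f 2 6 7 + phi_e f 3 5 7 = 0)
    by structure_eq (calibrated_dphi_at Hcal 1 2 5 7).
  assert (E1347 : phi_e f 3 5 7 = 0) by structure_eq (calibrated_dphi_at Hcal 1 3 4 7).
  assert (E1267 : phi_e f 3 6 7 = 0) by structure_eq (calibrated_dphi_at Hcal 1 2 6 7).
  assert (E1367 : phi_e f 4 6 7 = 0) by structure_eq (calibrated_dphi_at Hcal 1 3 6 7).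
  assert (E1467 : phi_e f 5 6 7 = 0) by structure_eq (calibrated_dphi_at Hcal 1 4 6 7).
  assert (H167 : phi_e f 1 6 7 = 0)
    by (apply (Rmult_eq0_cancel_l (l * l - l + 1)); [nra | nsatz]).
  assert (H267 : phi_e f 2 6 7 = 0) by lra.
  apply (e7_ek_contraction_nonzero f 6 Hf); [lia | contraction_components_eq0].
Qed.

Lemma L147E1_not_calibrated l f : l <> 0 -> l <> 2 -> l <> -2 -> ~ calibrated (L147E1 l) f.
Proof.
  intros Hl0 Hl2 Hl2' Hcal. pose proof (proj1 Hcal) as Hf.
  assert (E1245 : - l * phi_e f 1 4 7 = 0) by structure_eq (calibrated_dphi_at Hcal 1 2 4 5).
  assert (E1246 : - 2 * phi_e f 1 4 7 - l * phi_e f 2 4 7 = 0)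
    by structure_eq (calibrated_dphi_at Hcal 1 2 4 6).
  assert (E1237 : - phi_e f 1 5 7 - phi_e f 2 6 7 - phi_e f 3 4 7 = 0)
    by structure_eq (calibrated_dphi_at Hcal 1 2 3 7).
  assert (E1256 : - 2 * phi_e f 1 5 7 + l * phi_e f 1 6 7 - l * phi_e f 2 5 7
                  + phi_e f 4 5 6 = 0)
    by structure_eq (calibrated_dphi_at Hcal 1 2 5 6).
  assert (E1346 : - 2 * phi_e f 1 6 7 - l * phi_e f 3 4 7 = 0)
    by structure_eq (calibrated_dphi_at Hcal 1 3 4 6).
  assert (E2345 : - 2 * phi_e f 2 5 7 + l * phi_e f 3 4 7 = 0)
    by structure_eq (calibrated_dphi_at Hcal 2 3 4 5).
  assert (E2346 : - 2 * phi_e f 2 6 7 + 2 * phi_e f 3 4 7 - phi_e f 4 5 6 = 0)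
    by structure_eq (calibrated_dphi_at Hcal 2 3 4 6).
  assert (E1257 : phi_e f 4 5 7 = 0) by structure_eq (calibrated_dphi_at Hcal 1 2 5 7).
  assert (E1267 : phi_e f 4 6 7 = 0) by structure_eq (calibrated_dphi_at Hcal 1 2 6 7).
  assert (H147 : phi_e f 1 4 7 = 0) by (apply (Rmult_eq0_cancel_l l); [lra | nsatz]).
  assert (H247 : phi_e f 2 4 7 = 0) by (apply (Rmult_eq0_cancel_l l); [lra | nsatz]).
  assert (H347 : phi_e f 3 4 7 = 0).
  { apply (Rmult_eq0_cancel_l ((l - 2) * (l + 2))); [|nsatz].
    apply Rmult_integral_contrapositive_currified; lra. }
  apply (e7_ek_contraction_nonzero f 4 Hf); [lia | contraction_components_eq0].
Qed.

Lemma L1357QRS1_not_calibrated l f : l <> 0 -> l <> 1 -> ~ calibrated (L1357QRS1 l) f.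
Proof.
  intros Hl0 Hl1 Hcal. pose proof (proj1 Hcal) as Hf.
  assert (E1247 : - phi_e f 1 5 7 + phi_e f 2 6 7 + phi_e f 3 4 7 = 0)
    by structure_eq (calibrated_dphi_at Hcal 1 2 4 7).
  assert (E1256 : - l * phi_e f 1 5 7 - phi_e f 2 6 7 + phi_e f 3 5 6 = 0)
    by structure_eq (calibrated_dphi_at Hcal 1 2 5 6).
  assert (E1345 : (1 - l) * phi_e f 1 5 7 + phi_e f 3 4 7 - phi_e f 3 5 6 = 0)
    by structure_eq (calibrated_dphi_at Hcal 1 3 4 5).
  assert (E2346 : (1 - l) * phi_e f 2 6 7 + l * phi_e f 3 4 7 + phi_e f 3 5 6 = 0)
    by structure_eq (calibrated_dphi_at Hcal 2 3 4 6).
  assert (E1237 : phi_e f 1 6 7 + phi_e f 2 5 7 = 0)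
    by structure_eq (calibrated_dphi_at Hcal 1 2 3 7).
  assert (E1346 : (1 - l) * phi_e f 1 6 7 - phi_e f 4 5 6 = 0)
    by structure_eq (calibrated_dphi_at Hcal 1 3 4 6).
  assert (E2345 : (1 - l) * phi_e f 2 5 7 - phi_e f 4 5 6 = 0)
    by structure_eq (calibrated_dphi_at Hcal 2 3 4 5).
  assert (E1257 : phi_e f 3 5 7 = 0) by structure_eq (calibrated_dphi_at Hcal 1 2 5 7).
  assert (E2456 : l * phi_e f 4 5 7 = 0) by structure_eq (calibrated_dphi_at Hcal 2 4 5 6).
  assert (E1367 : phi_e f 5 6 7 = 0) by structure_eq (calibrated_dphi_at Hcal 1 3 6 7).
  assert (H157 : phi_e f 1 5 7 = 0)
    by (apply (Rmult_eq0_cancel_l (l * l - l + 1)); [nra | nsatz]).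
  assert (H257 : phi_e f 2 5 7 = 0) by (apply (Rmult_eq0_cancel_l (l - 1)); [lra | nsatz]).
  assert (H457 : phi_e f 4 5 7 = 0) by (apply (Rmult_eq0_cancel_l l); [lra | nsatz]).
  apply (e7_ek_contraction_nonzero f 5 Hf); [lia | contraction_components_eq0].
Qed.

Lemma L12457N2_not_calibrated l f : ~ calibrated (L12457N2 l) f.
Proof.
  intros Hcal. pose proof (proj1 Hcal) as Hf.
  assert (E1257 : phi_e f 1 6 7 + phi_e f 3 5 7 = 0)
    by structure_eq (calibrated_dphi_at Hcal 1 2 5 7).
  assert (E1356 : - phi_e f 1 6 7 + phi_e f 3 5 7 - phi_e f 3 6 7 + phi_e f 4 5 6 = 0)
    by structure_eq (calibrated_dphi_at Hcal 1 3 5 6).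
  assert (E2346 : - phi_e f 3 6 7 - phi_e f 4 5 6 = 0)
    by structure_eq (calibrated_dphi_at Hcal 2 3 4 6).
  assert (E1247 : - phi_e f 2 6 7 + phi_e f 3 4 7 = 0)
    by structure_eq (calibrated_dphi_at Hcal 1 2 4 7).
  assert (E1346 : phi_e f 3 4 7 = 0) by structure_eq (calibrated_dphi_at Hcal 1 3 4 6).
  assert (E1267 : phi_e f 3 6 7 = 0) by structure_eq (calibrated_dphi_at Hcal 1 2 6 7).
  assert (E1367 : phi_e f 4 6 7 = 0) by structure_eq (calibrated_dphi_at Hcal 1 3 6 7).
  assert (E1457 : phi_e f 5 6 7 = 0) by structure_eq (calibrated_dphi_at Hcal 1 4 5 7).
  apply (e7_ek_contraction_nonzero f 6 Hf); [lia | contraction_components_eq0].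
Qed.

(* Here no single [e_k] works in general: the kernel vector of [iota_{e7} phi] is a combination
   of [e_3], [e_5], [e_6] built from its remaining components. *)
Lemma L1357QRS1_1_not_calibrated f : ~ calibrated (L1357QRS1 1) f.
Proof.
  intros Hcal. pose proof (proj1 Hcal) as Hf.
  assert (E1247 : - phi_e f 1 5 7 + phi_e f 2 6 7 + phi_e f 3 4 7 = 0)
    by structure_eq (calibrated_dphi_at Hcal 1 2 4 7).
  assert (E1256 : - phi_e f 1 5 7 - phi_e f 2 6 7 + phi_e f 3 5 6 = 0)
    by structure_eq (calibrated_dphi_at Hcal 1 2 5 6).
  assert (E1345 : phi_e f 3 4 7 - phi_e f 3 5 6 = 0)
    by structure_eq (calibrated_dphi_at Hcal 1 3 4 5).
  assert (E2346 : phi_e f 3 4 7 + phi_e f 3 5 6 = 0)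
    by structure_eq (calibrated_dphi_at Hcal 2 3 4 6).
  assert (E1257 : phi_e f 3 5 7 = 0) by structure_eq (calibrated_dphi_at Hcal 1 2 5 7).
  assert (E1267 : phi_e f 3 6 7 = 0) by structure_eq (calibrated_dphi_at Hcal 1 2 6 7).
  assert (E2456 : phi_e f 4 5 7 = 0) by structure_eq (calibrated_dphi_at Hcal 2 4 5 6).
  assert (E1456 : - phi_e f 4 6 7 = 0) by structure_eq (calibrated_dphi_at Hcal 1 4 5 6).
  assert (E1367 : phi_e f 5 6 7 = 0) by structure_eq (calibrated_dphi_at Hcal 1 3 6 7).
  assert (H157 : phi_e f 1 5 7 = 0) by lra. assert (H267 : phi_e f 2 6 7 = 0) by lra.
  assert (H347 : phi_e f 3 4 7 = 0) by lra. assert (H467 : phi_e f 4 6 7 = 0) by lra.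
  destruct (Req_dec (phi_e f 2 5 7) 0) as [H257|H257].
  { apply (e7_ek_contraction_nonzero f 5 Hf); [lia | contraction_components_eq0]. }
  destruct (Req_dec (phi_e f 1 6 7) 0) as [H167|H167].
  { apply (e7_ek_contraction_nonzero f 6 Hf); [lia | contraction_components_eq0]. }
  set (Y := fun j => match j with
                     | 3%nat => phi_e f 1 6 7 * phi_e f 2 5 7
                     | 5%nat => - phi_e f 2 3 7 * phi_e f 1 6 7
                     | 6%nat => - phi_e f 1 3 7 * phi_e f 2 5 7
                     | _ => 0 end).
  assert (HY : Y 3%nat = 0).
  { apply (e7_contraction_kernel f Y Hf); [|lia].
    apply phi_eq0_of_basis. intros j Hj. rewrite phi_linear2. unfold sum7, Y.
    destruct j as [|[|[|[|[|[|[|[|]]]]]]]]; try lia; sort_phi f;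
      rewrite ?H157, ?H267, ?H347, ?H467, ?E1257, ?E1267, ?E2456, ?E1367; ring. }
  exact (Rmult_integral_contrapositive_currified _ _ H167 H257 HY).
Qed.

(** * The three calibrated coframes *)

Definition phiw (k : nat -> R) (f : frame) (x y z : vec) : R :=
  k 1%nat * w3 f 1 2 7 x y z + k 2%nat * w3 f 3 4 7 x y z + k 3%nat * w3 f 5 6 7 x y z
  + k 4%nat * w3 f 1 3 5 x y z - k 5%nat * w3 f 2 3 6 x y z - k 6%nat * w3 f 1 4 6 x y z
  - k 7%nat * w3 f 2 4 5 x y z.

Definition dphiw (L : lie7) (k : nat -> R) (f : frame) (x0 x1 x2 x3 : vec) : R :=
  - phiw k f (br L x0 x1) x2 x3 + phiw k f (br L x0 x2) x1 x3 - phiw k f (br L x0 x3) x1 x2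
  - phiw k f (br L x1 x2) x0 x3 + phiw k f (br L x1 x3) x0 x2 - phiw k f (br L x2 x3) x0 x1.

Lemma is_coframe_of_basis f :
  (forall a : nat -> R, (forall j, (1 <= j <= 7)%nat -> sum7 (fun i => a i * f i j) = 0) ->
     forall i, (1 <= i <= 7)%nat -> a i = 0) -> is_coframe f.
Proof.
  intros H a Ha. apply H. intros j Hj. rewrite <- (Ha (eb j)). unfold sum7.
  rewrite !ev1_eb by exact Hj. reflexivity.
Qed.

Section Rescaling.

Variables (f g : frame) (c : nat -> R).
Hypothesis Hfg : forall a x, ev1 (f a) x = c a * ev1 (g a) x.

Lemma is_coframe_rescale :
  is_coframe g -> (forall a, (1 <= a <= 7)%nat -> c a <> 0) -> is_coframe f.
Proof.
  intros Hg Hc a Ha i Hi.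
  apply (Rmult_eq_reg_r (c i)); [rewrite Rmult_0_l | exact (Hc i Hi)].
  apply (Hg (fun i => a i * c i)); [|exact Hi]. intros x.
  rewrite <- (Ha x). unfold sum7. rewrite !Hfg. ring.
Qed.

Lemma w3_rescale a b d x y z : w3 f a b d x y z = c a * c b * c d * w3 g a b d x y z.
Proof. unfold w3. rewrite !Hfg. ring. Qed.

Lemma phi_rescale (s : R) (k : nat -> R) :
  c 1%nat * c 2%nat * c 7%nat = s * k 1%nat -> c 3%nat * c 4%nat * c 7%nat = s * k 2%nat ->
  c 5%nat * c 6%nat * c 7%nat = s * k 3%nat -> c 1%nat * c 3%nat * c 5%nat = s * k 4%nat ->
  c 2%nat * c 3%nat * c 6%nat = s * k 5%nat -> c 1%nat * c 4%nat * c 6%nat = s * k 6%nat ->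
  c 2%nat * c 4%nat * c 5%nat = s * k 7%nat ->
  forall x y z, phi f x y z = s * phiw k g x y z.
Proof.
  intros H1 H2 H3 H4 H5 H6 H7 x y z. unfold phi, phiw. rewrite !w3_rescale.
  rewrite H1, H2, H3, H4, H5, H6, H7. ring.
Qed.

Lemma calibrated_rescale L s k :
  is_coframe g -> (forall a, (1 <= a <= 7)%nat -> c a <> 0) ->
  (forall x y z, phi f x y z = s * phiw k g x y z) ->
  (forall x0 x1 x2 x3, dphiw L k g x0 x1 x2 x3 = 0) -> calibrated L f.
Proof.
  intros Hg Hc Hphi Hd. split; [exact (is_coframe_rescale Hg Hc)|].
  intros x0 x1 x2 x3. unfold dphi. rewrite !Hphi.
  replace 0 with (s * dphiw L k g x0 x1 x2 x3) by (rewrite Hd; ring).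
  unfold dphiw. ring.
Qed.

End Rescaling.

Ltac coframe_by_lra :=
  apply is_coframe_of_basis; intros a H;
  pose proof (H 1%nat ltac:(lia)); pose proof (H 2%nat ltac:(lia));
  pose proof (H 3%nat ltac:(lia)); pose proof (H 4%nat ltac:(lia));
  pose proof (H 5%nat ltac:(lia)); pose proof (H 6%nat ltac:(lia));
  pose proof (H 7%nat ltac:(lia)); clear H;
  unfold sum7, co in *; simpl in *;
  intros i Hi; destruct i as [|[|[|[|[|[|[|[|]]]]]]]]; try lia; lra.

Ltac rescale_by_ring :=
  intros a x; destruct a as [|[|[|[|[|[|[|[|a]]]]]]]]; unfold ev1, sum7, co; simpl; ring.

Definition frame_1357N_rational : frame := fun a => match a with
  | 1%nat => co [(2, 1%nat); (-1, 7%nat); (-1, 6%nat); (-1, 5%nat)]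
  | 2%nat => co [(1, 4%nat); (1, 3%nat); (-2, 2%nat); (-1, 6%nat); (1, 5%nat)]
  | 3%nat => co [(2, 3%nat); (-1, 6%nat)]
  | 4%nat => co [(2, 5%nat)]
  | 5%nat => co [(-1, 3%nat); (3, 4%nat); (1, 5%nat); (-1, 6%nat)]
  | 6%nat => co [(2, 3%nat); (-1, 5%nat); (-1, 6%nat); (3, 7%nat)]
  | 7%nat => co [(-1, 6%nat)]
  | _ => co [] end.

Lemma calibrated_1357N : calibrated (L1357N 1) frame_1357N.
Proof.
  set (c := fun a : nat => match a with 1%nat | 2%nat | 7%nat => sqrt 3 | _ => 1 end).
  assert (Hs3 : sqrt 3 * sqrt 3 = 3) by (apply sqrt_sqrt; lra).
  assert (Hs3pos : 0 < sqrt 3) by (apply sqrt_lt_R0; lra).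
  assert (Hfg : forall a x, ev1 (frame_1357N a) x = c a * ev1 (frame_1357N_rational a) x)
    by rescale_by_ring.
  apply (calibrated_rescale _ _ c Hfg _ (sqrt 3) (fun t => match t with 1%nat => 3 | _ => 1 end)).
  - coframe_by_lra.
  - intros a Ha. destruct a as [|[|[|[|[|[|[|[|a]]]]]]]]; try lia; unfold c; lra.
  - apply (phi_rescale _ _ c Hfg); unfold c; clear -Hs3; nsatz.
  - intros. unfold dphiw, phiw, w3, ev1, sum7, br, ev2, co; simpl. ring.
Qed.

Definition frame_1357S_rational : frame := fun a => match a with
  | 1%nat => co [(2, 1%nat); (1, 2%nat); (-1, 5%nat); (1, 6%nat)]
  | 2%nat => co [(7, 2%nat); (3, 5%nat); (5, 6%nat)]
  | 3%nat => co [(1, 3%nat); (2, 4%nat); (- (3/2), 7%nat)]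
  | 4%nat => co [(3, 3%nat); (7/2, 7%nat)]
  | 5%nat => co [(-1, 6%nat)]
  | 6%nat => co [(2, 5%nat); (1, 6%nat)]
  | 7%nat => co [(-2, 3%nat)]
  | _ => co [] end.

Lemma calibrated_1357S : calibrated (L1357S (-3)) frame_1357S.
Proof.
  set (c := fun a : nat => match a with
                           | 1%nat | 3%nat => sqrt 7 | 5%nat => sqrt 70 | 6%nat | 7%nat => sqrt 10
                           | _ => 1 end).
  assert (Hs7 : sqrt 7 * sqrt 7 = 7) by (apply sqrt_sqrt; lra).
  assert (Hs10 : sqrt 10 * sqrt 10 = 10) by (apply sqrt_sqrt; lra).
  assert (Hs70 : sqrt 70 = sqrt 7 * sqrt 10) by (rewrite <- sqrt_mult by lra; f_equal; lra).
  assert (Hs7pos : 0 < sqrt 7) by (apply sqrt_lt_R0; lra).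
  assert (Hs10pos : 0 < sqrt 10) by (apply sqrt_lt_R0; lra).
  assert (Hs70pos : 0 < sqrt 70) by (apply sqrt_lt_R0; lra).
  assert (Hfg : forall a x, ev1 (frame_1357S a) x = c a * ev1 (frame_1357S_rational a) x)
    by rescale_by_ring.
  apply (calibrated_rescale _ _ c Hfg _ (sqrt 70)
           (fun t => match t with 3%nat => 10 | 4%nat => 7 | _ => 1 end)).
  - coframe_by_lra.
  - intros a Ha. destruct a as [|[|[|[|[|[|[|[|a]]]]]]]]; try lia; unfold c; lra.
  - apply (phi_rescale _ _ c Hfg); unfold c; clear -Hs7 Hs10 Hs70; nsatz.
  - intros. unfold dphiw, phiw, w3, ev1, sum7, br, ev2, co; simpl. field.
Qed.

Definition frame_147E1_rational : frame := fun a => match a with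
  | 1%nat => co [(2, 1%nat); (1, 5%nat); (-1, 2%nat); (1, 6%nat)]
  | 2%nat => co [(3, 2%nat); (-1, 5%nat); (1, 6%nat)]
  | 3%nat => co [(1, 3%nat); (2, 4%nat)]
  | 4%nat => co [(1, 3%nat); (1, 7%nat)]
  | 5%nat => co [(1, 6%nat); (-1, 5%nat)]
  | 6%nat => co [(1, 5%nat); (1, 6%nat)]
  | 7%nat => co [(2, 4%nat); (-2, 3%nat)]
  | _ => co [] end.

Lemma calibrated_147E1 : calibrated (L147E1 2) frame_147E1.
Proof.
  set (c := fun a : nat => match a with
                           | 1%nat | 4%nat => sqrt 3 | 5%nat | 7%nat => sqrt 2 | 6%nat => sqrt 6
                           | _ => 1 end).
  assert (Hs2 : sqrt 2 * sqrt 2 = 2) by (apply sqrt_sqrt; lra).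
  assert (Hs3 : sqrt 3 * sqrt 3 = 3) by (apply sqrt_sqrt; lra).
  assert (Hs6 : sqrt 6 = sqrt 2 * sqrt 3) by (rewrite <- sqrt_mult by lra; f_equal; lra).
  assert (Hs2pos : 0 < sqrt 2) by (apply sqrt_lt_R0; lra).
  assert (Hs3pos : 0 < sqrt 3) by (apply sqrt_lt_R0; lra).
  assert (Hs6pos : 0 < sqrt 6) by (apply sqrt_lt_R0; lra).
  assert (Hfg : forall a x, ev1 (frame_147E1 a) x = c a * ev1 (frame_147E1_rational a) x)
    by rescale_by_ring.
  apply (calibrated_rescale _ _ c Hfg _ (sqrt 6)
           (fun t => match t with 3%nat => 2 | 6%nat => 3 | _ => 1 end)).
  - coframe_by_lra.
  - intros a Ha. destruct a as [|[|[|[|[|[|[|[|a]]]]]]]]; try lia; unfold c; lra.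
  - apply (phi_rescale _ _ c Hfg); unfold c; clear -Hs2 Hs3 Hs6; nsatz.
  - intros. unfold dphiw, phiw, w3, ev1, sum7, br, ev2, co; simpl. ring.
Qed.

Lemma admits_calibrated_iff (L : R -> lie7) l l0 f0 :
  calibrated (L l0) f0 -> (forall f, l <> l0 -> ~ calibrated (L l) f) ->
  (admits_calibrated_G2 (L l) <-> l = l0).
Proof.
  intros Hf0 Hno. split.
  - intros [f Hf]. destruct (Req_dec l l0) as [E|E]; [exact E | exact (False_ind _ (Hno f E Hf))].
  - intros ->. exists f0. exact Hf0.
Qed.

Theorem lemma4p1 :
  (forall l : R, l <> 0 -> l <> 1 -> ~ admits_calibrated_G2 (L147E l)) /\
  (forall l : R, l <> 0 -> ~ admits_calibrated_G2 (L1357M l)) /\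
  (forall l : R, admits_calibrated_G2 (L1357N l) <-> l = 1) /\
  (forall l : R, l <> 1 -> (admits_calibrated_G2 (L1357S l) <-> l = -3)) /\
  (forall l : R, ~ admits_calibrated_G2 (L12457N l)) /\
  (forall l : R, ~ admits_calibrated_G2 (L123457I l)) /\
  (forall l : R, l > 1 -> (admits_calibrated_G2 (L147E1 l) <-> l = 2)) /\
  (forall l : R, l <> 0 -> ~ admits_calibrated_G2 (L1357QRS1 l)) /\
  (forall l : R, l >= 0 -> ~ admits_calibrated_G2 (L12457N2 l)) /\
  calibrated (L1357N 1) frame_1357N /\
  calibrated (L1357S (-3)) frame_1357S /\
  calibrated (L147E1 2) frame_147E1.
Proof.
  split; [intros l _ Hl [f Hf]; exact (L147E_not_calibrated l f Hl Hf)|].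
  split; [intros l Hl [f Hf]; exact (L1357M_not_calibrated l f Hl Hf)|].
  split; [intros l; apply (admits_calibrated_iff L1357N l 1 _ calibrated_1357N);
          exact (L1357N_not_calibrated l)|].
  split; [intros l _; apply (admits_calibrated_iff L1357S l (-3) _ calibrated_1357S);
          exact (L1357S_not_calibrated l)|].
  split; [intros l [f Hf]; exact (L12457N_not_calibrated l f Hf)|].
  split; [intros l [f Hf]; exact (L123457I_not_calibrated l f Hf)|].
  split.
  { intros l Hl. apply (admits_calibrated_iff L147E1 l 2 _ calibrated_147E1).
    intros f Hl2. apply L147E1_not_calibrated; lra. }
  split.
  { intros l Hl0 [f Hf]. destruct (Req_dec l 1) as [->|Hl1].
    - exact (L1357QRS1_1_not_calibrated f Hf).
    - exact (L1357QRS1_not_calibrated l f Hl0 Hl1 Hf). }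
  split; [intros l _ [f Hf]; exact (L12457N2_not_calibrated l f Hf)|].
  split; [exact calibrated_1357N | split; [exact calibrated_1357S | exact calibrated_147E1]].
Qed.
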